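(* Let $k$ be an odd positive integer. Then $\Bbbk_{-1}[u,v]^{G_{2,k}}\cong\Bbbk[u,v]^{\frac1{4k}(1,2k+1)}$; in particular it is a commutative cyclic quotient singularity.
   Context: $\Bbbk$ is algebraically closed of characteristic $0$; $\Bbbk_{-1}[u,v]=\Bbbk\langle u,v\rangle/(vu+uv)$; matrices $\begin{pmatrix}a&b\\c&d\end{pmatrix}$ act by $u\mapsto au+cv$, $v\mapsto bu+dv$. $G_{n,k}$ is generated by $\mathrm{diag}(\omega^{2k},\omega^{-2k})$ and $\begin{pmatrix}0&\omega^n\\\omega^n&0\end{pmatrix}$ for $\omega$ a primitive $(2nk)$th root of unity. $\frac1m(1,b)$ is the cyclic group generated by $\mathrm{diag}(\omega_m,\omega_m^b)$ acting on the commutative polynomial ring $\Bbbk[u,v]$. *)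

From HB Require Import structures.
From mathcomp Require Import all_boot all_order all_algebra all_field.
Set Implicit Arguments. Unset Strict Implicit. Unset Printing Implicit Defensive.
Import Order.TTheory GRing.Theory Num.Theory.
Local Open Scope ring_scope.

(* Two-variable polynomials are represented as {poly {poly K}}:
   the coefficient of u^i v^j in p is p`_i`_j; u is the outer variable 'X,
   v is the inner variable ('X)%:P.  For the commutative ring k[u,v] this is
   the usual ring structure.  For the skew ring k_{-1}[u,v] we use the same
   underlying vector space (normal-form basis u^i v^j) with the skew product
   (u^a v^b)(u^c v^d) = (-1)^(b c) u^(a+c) v^(b+d), which is exactly the
   multiplication of k<u,v>/(vu+uv) in the PBW basis. *)

Section TwoVar.
Variable K : fieldType.

Definition bpoly := {poly {poly K}}.

Definition var_u : bpoly := 'X.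
Definition var_v : bpoly := ('X)%:P.

Definition mono (i j : nat) : bpoly := ('X^j)%:P * 'X^i.

Definition kscale (c : K) (p : bpoly) : bpoly := c%:P%:P * p.

Definition smul (p q : bpoly) : bpoly :=
  \sum_(i < size p) \sum_(j < size p`_i) \sum_(k < size q) \sum_(l < size q`_k)
    kscale (p`_i`_j * q`_k`_l * (-1) ^+ (j * k)) (mono (i + k) (j + l)).

Definition spow (p : bpoly) (n : nat) : bpoly := iter n (smul p) 1.

Definition mx2 (a b c d : K) : 'M[K]_2 :=
  \matrix_(i < 2, j < 2)
    if (i : nat) == 0%N then (if (j : nat) == 0%N then a else b)
    else (if (j : nat) == 0%N then c else d).

Definition linf (a c : K) : bpoly := kscale a var_u + kscale c var_v.

Definition sact (M : 'M[K]_2) (p : bpoly) : bpoly :=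
  \sum_(i < size p) \sum_(j < size p`_i)
    kscale p`_i`_j (smul (spow (linf (M 0 0) (M 1 0)) i)
                         (spow (linf (M 0 1) (M 1 1)) j)).

Definition cact (M : 'M[K]_2) (p : bpoly) : bpoly :=
  \sum_(i < size p) \sum_(j < size p`_i)
    kscale p`_i`_j ((linf (M 0 0) (M 1 0)) ^+ i * (linf (M 0 1) (M 1 1)) ^+ j).

(* the (finite) group generated by a list of finite-order matrices
   = the monoid they generate *)
Inductive in_gen (gs : seq 'M[K]_2) : 'M[K]_2 -> Prop :=
| in_gen1 : in_gen gs 1%:M
| in_genM : forall M g, in_gen gs M -> g \in gs -> in_gen gs (M *m g).

Definition G_nk (n k : nat) (w : K) : seq 'M[K]_2 :=
  [:: mx2 (w ^+ (2 * k)) 0 0 (w ^- (2 * k)); mx2 0 (w ^+ n) (w ^+ n) 0].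

Definition cyc_gen (m b : nat) (w : K) : seq 'M[K]_2 :=
  [:: mx2 w 0 0 (w ^+ b)].

Definition skew_invariant (gs : seq 'M[K]_2) (p : bpoly) : Prop :=
  forall M, in_gen gs M -> sact M p = p.

Definition comm_invariant (gs : seq 'M[K]_2) (p : bpoly) : Prop :=
  forall M, in_gen gs M -> cact M p = p.

Definition alg_iso_skew_comm (A B : bpoly -> Prop) : Prop :=
  exists f : bpoly -> bpoly,
    [/\ forall p, A p -> B (f p),
        forall q, B q -> exists2 p, A p & f p = q,
        forall p q, A p -> A q -> f p = f q -> p = q,
        f 1 = 1 &
        forall p q c, A p -> A q ->
          [/\ f (p + q) = f p + f q, f (smul p q) = f p * f q
            & f (kscale c p) = kscale c (f p)]].

End TwoVar.

(* Both rings are described by their coefficients in the monomial basis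
   u^a v^b.  G_{2,k} consists of the matrices mu I and mu [[0,1],[1,0]] with
   mu^(2k) = 1, so p is a skew invariant iff its coefficients are supported on
   2k | a + b and satisfy p_ab = (-1)^(ab) p_ba.  The isomorphism is the
   composite of two maps:
   - the twist phi : u^a v^b |-> (-1)^(a(a-1)/2) u^a v^b, which turns the
     skew product into the commutative one on polynomials of even degree and
     turns the skew symmetry into invariance under u |-> w' v, v |-> w' u
     (this uses that k is odd and w'^(2k) = -1);
   - the change of variables psi : u |-> u + v, v |-> u - v, an automorphism
     of k[u,v] when 2 != 0, which conjugates that swap into the generator
     diag(w', w'^(2k+1)) = diag(w', -w') of the cyclic group 1/4k(1,2k+1). *)

From HB Require Import structures.
From mathcomp Require Import all_boot all_order all_algebra all_field.
From mathcomp Require Import zify ring.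
Import GRing.Theory.
Local Open Scope ring_scope.

Set Implicit Arguments. Unset Strict Implicit. Unset Printing Implicit Defensive.

Lemma sum_widen (V : zmodType) n N (F : nat -> V) : (n <= N)%N ->
  (forall i, (n <= i < N)%N -> F i = 0) ->
  \sum_(i < n) F i = \sum_(i < N) F i.
Proof.
move=> nN F0; rewrite -!(big_mkord xpredT) (big_cat_nat (leq0n n) nN) /=.
by rewrite [X in _ = _ + X]big1_seq ?addr0 // => i /andP[_]; rewrite mem_index_iota; apply: F0.
Qed.

Lemma sum_ord_only (V : zmodType) N a (F : 'I_N -> V) (aN : (a < N)%N) :
  (forall i : 'I_N, (i : nat) != a -> F i = 0) -> \sum_(i < N) F i = F (Ordinal aN).
Proof. by move=> F0; rewrite (bigD1 (Ordinal aN)) //= big1 ?addr0. Qed.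

Lemma size_map_le (R1 R2 : nzRingType) (f : {additive R1 -> R2}) (p : {poly R1}) :
  (size (map_poly f p) <= size p)%N.
Proof. by apply/leq_sizeP => j hj; rewrite coef_map nth_default // raddf0. Qed.

Lemma horner_morph_wide (R1 R2 : nzRingType) (f : {rmorphism R1 -> R2}) u
    (cfu : commr_rmorph f u) (p : {poly R1}) n : (size p <= n)%N ->
  horner_morph cfu p = \sum_(i < n) f p`_i * u ^+ i.
Proof.
move=> h; rewrite /horner_morph (horner_coef_wide _ (leq_trans (size_map_le f p) h)).
by apply: eq_bigr => i _; rewrite coef_map.
Qed.

Lemma prim_root_half (F : fieldType) n (z : F) : (n * 2).-primitive_root z -> z ^+ n = -1.
Proof.
move=> hz; have n_gt0 : (0 < n)%N by move: (prim_order_gt0 hz); rewrite muln_gt0 andbT.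
have zn_neq1 : z ^+ n != 1.
  by rewrite -(prim_order_dvd hz); apply/negP => /(dvdn_leq n_gt0); lia.
have : (z ^+ n) ^+ 2 == 1 by rewrite -exprM prim_expr_order.
by rewrite sqrf_eq1 (negbTE zn_neq1) => /eqP.
Qed.

Lemma neg1_neq1 (F : fieldType) : (2 : F) != 0 -> (-1 : F) != 1.
Proof. by move=> two_neq0; apply: contraNneq two_neq0 => e; rewrite -[2]/(1 + 1) -{1}e addNr. Qed.

Section Matrices.
Variable K : fieldType.

Lemma mx2E (a b c d : K) : let M := mx2 a b c d in
  [/\ M 0 0 = a, M 0 1 = b, M 1 0 = c & M 1 1 = d].
Proof. by rewrite /mx2 !mxE. Qed.

Lemma mx2_mul (a b c d a' b' c' d' : K) :
  mx2 a b c d *m mx2 a' b' c' d' =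
  mx2 (a * a' + b * c') (a * b' + b * d') (c * a' + d * c') (c * b' + d * d').
Proof.
apply/matrixP => i j; rewrite !mxE !big_ord_recl big_ord0 !mxE /=.
by case: i => [[|[|i]] hi] //=; case: j => [[|[|j]] hj] //=; rewrite addr0.
Qed.

Lemma mx2_1 : 1%:M = mx2 1 0 0 (1 : K).
Proof.
apply/matrixP => i j; rewrite !mxE /=.
by case: i => [[|[|i]] hi] //=; case: j => [[|[|j]] hj].
Qed.

End Matrices.

Section Coefficients.
Variable K : fieldType.
Local Notation bp := (bpoly K).

Lemma coef_kscale (c : K) (p : bp) i j : (kscale c p)`_i`_j = c * p`_i`_j.
Proof. by rewrite /kscale !coefCM. Qed.

Lemma coef_kmono (c : K) a b i j :
  (kscale c (mono K a b))`_i`_j = if (i == a) && (j == b) then c else 0.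
Proof.
rewrite coef_kscale /mono coefCM coefXn.
case: (i == a) => /=; last by rewrite mulr0 coef0 mulr0.
by rewrite mulr1 coefXn; case: (j == b); rewrite ?mulr1 ?mulr0.
Qed.

Lemma kscale0 (p : bp) : kscale 0 p = 0.
Proof. by rewrite /kscale !polyC0 mul0r. Qed.

Lemma kscale1 (p : bp) : kscale 1 p = p.
Proof. by rewrite /kscale !polyC1 mul1r. Qed.

Lemma kscaleA (a b : K) (p : bp) : kscale a (kscale b p) = kscale (a * b) p.
Proof. by rewrite /kscale mulrA !polyCM. Qed.

Lemma kscaleMM (a b : K) (p q : bp) :
  kscale a p * kscale b q = kscale (a * b) (p * q).
Proof. by rewrite /kscale !polyCM mulrACA. Qed.

Lemma monoM a b c d : mono K a b * mono K c d = mono K (a + c) (b + d).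
Proof. by rewrite /mono mulrACA -polyCM -!exprD. Qed.

Lemma mono00 : mono K 0 0 = 1.
Proof. by rewrite /mono !expr0 mul1r. Qed.

Definition bounded N (p : bp) := leq (size p) N /\ forall i : nat, leq (size p`_i) N.

Lemma bounded_exists (p : bp) a b : exists N, [/\ bounded N p, (a < N)%N & (b < N)%N].
Proof.
exists (size p + \sum_(i < size p) size (p`_i)%R + a + b).+1.
split; [split=> [|i] | lia | lia]; first lia.
case: (ltnP i (size p)) => hi; last by rewrite nth_default ?size_poly0.
suff : (size (p`_i)%R <= \sum_(i < size p) size (p`_i)%R)%N by lia.
by rewrite (bigD1 (Ordinal hi)) //= leq_addr.
Qed.

Lemma bounded_le N M p : (N <= M)%N -> bounded N p -> bounded M p.
Proof. by move=> NM [h1 h2]; split=> [|i]; apply: leq_trans NM; rewrite ?h2. Qed.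

Lemma bounded_coef N p i j : bounded N p -> (N <= i)%N || (N <= j)%N -> p`_i`_j = 0.
Proof.
case=> h1 h2 /orP[hi|hj]; last exact: nth_default (leq_trans (h2 i) hj).
by rewrite (nth_default _ (leq_trans h1 hi)) coef0.
Qed.

Lemma boundedP N (p : bp) :
  (forall i j, p`_i`_j != 0 -> (i < N)%N && (j < N)%N) -> bounded N p.
Proof.
move=> H; split=> [|i].
  apply/leq_sizeP => i hi; apply/polyP => j; rewrite coef0.
  by apply/eqP; apply: contraTT hi => /H /andP[]; rewrite -ltnNge.
apply/leq_sizeP => j hj; apply/eqP; apply: contraTT hj => /H /andP[_].
by rewrite -ltnNge.
Qed.

Lemma bounded_kmono (c : K) a b N :
  (a < N)%N -> (b < N)%N -> bounded N (kscale c (mono K a b)).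
Proof.
move=> ha hb; apply: boundedP => i j; rewrite coef_kmono.
by case: (i =P a) => [->|]; case: (j =P b) => [->|]; rewrite ?ha ?hb ?eqxx.
Qed.

Lemma sum_coefs_widen (V : zmodType) N (p : bp) (h : nat -> nat -> K -> V) :
  bounded N p -> (forall i j, h i j 0 = 0) ->
  \sum_(i < size p) \sum_(j < size p`_i) h i j p`_i`_j =
  \sum_(i < N) \sum_(j < N) h i j p`_i`_j.
Proof.
move=> [h1 h2] h0.
rewrite (@sum_widen _ _ _ (fun i => \sum_(j < size p`_i) h i j p`_i`_j) h1); last first.
  by move=> i /andP[hi _]; rewrite (nth_default _ hi) size_poly0 big_ord0.
apply: eq_bigr => i _.
rewrite (@sum_widen _ _ _ (fun j => h i j p`_i`_j) (h2 i)) // => j /andP[hj _].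
by rewrite nth_default.
Qed.

Lemma coef_box N (c : nat -> nat -> K) a b :
  (\sum_(i < N) \sum_(j < N) kscale (c i j) (mono K i j))`_a`_b =
  if (a < N)%N && (b < N)%N then c a b else 0.
Proof.
rewrite !coef_sum; under eq_bigr => i _ do rewrite !coef_sum.
under eq_bigr => i _ do under eq_bigr => j _ do rewrite coef_kmono.
case: (ltnP a N) => ha /=; last first.
  apply: big1 => i _; apply: big1 => j _; case: (a =P i) => // ea.
  by move: (ltn_ord i); rewrite -ea ltnNge ha.
rewrite (sum_ord_only ha) /=; last first.
  by move=> i ne; apply: big1 => j _; rewrite eq_sym (negbTE ne).
rewrite eqxx /=; case: (ltnP b N) => hb.
  by rewrite (sum_ord_only hb) ?eqxx // => j /negbTE; rewrite eq_sym => ->.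
apply: big1 => j _; case: (b =P j) => // eb.
by move: (ltn_ord j); rewrite -eb ltnNge hb.
Qed.

Lemma box_expand N p : bounded N p ->
  p = \sum_(i < N) \sum_(j < N) kscale p`_i`_j (mono K i j).
Proof.
move=> hb; apply/polyP => a; apply/polyP => b.
rewrite (coef_box N (fun i j => p`_i`_j)).
case: ifP => // /negbT; rewrite negb_and -!leqNgt; exact: bounded_coef.
Qed.

Lemma coef_reweight (p : bp) (c : nat -> nat -> K) a b :
  (\sum_(i < size p) \sum_(j < size p`_i) kscale (p`_i`_j * c i j) (mono K i j))`_a`_b
  = p`_a`_b * c a b.
Proof.
have [N [hp ha hb]] := bounded_exists p a b.
rewrite (@sum_coefs_widen _ N p (fun i j x => kscale (x * c i j) (mono K i j))) //.
  by rewrite (coef_box N (fun i j => p`_i`_j * c i j)) ha hb.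
by move=> i j; rewrite mul0r kscale0.
Qed.

Lemma coef_reweight_swap (p : bp) (c : nat -> nat -> K) a b :
  (\sum_(i < size p) \sum_(j < size p`_i) kscale (p`_i`_j * c i j) (mono K j i))`_a`_b
  = p`_b`_a * c b a.
Proof.
have [N [hp ha hb]] := bounded_exists p b a.
rewrite (@sum_coefs_widen _ N p (fun i j x => kscale (x * c i j) (mono K j i))) //;
  last by move=> i j; rewrite mul0r kscale0.
by rewrite exchange_big /= (coef_box N (fun j i => p`_i`_j * c i j)) ha hb.
Qed.

Lemma smul_box N (p q : bp) : bounded N p -> bounded N q ->
  smul p q = \sum_(i < N) \sum_(j < N) \sum_(k < N) \sum_(l < N)
    kscale (p`_i`_j * q`_k`_l * (-1) ^+ (j * k)) (mono K (i + k) (j + l)).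
Proof.
move=> hp hq; rewrite /smul.
rewrite (@sum_coefs_widen _ N p (fun i j c => \sum_(k < size q) \sum_(l < size q`_k)
    kscale (c * q`_k`_l * (-1) ^+ (j * k)) (mono K (i + k) (j + l)))) //; last first.
  by move=> i j; apply: big1 => k _; apply: big1 => l _; rewrite !mul0r kscale0.
apply: eq_bigr => i _; apply: eq_bigr => j _.
rewrite (@sum_coefs_widen _ N q (fun k l c =>
    kscale (p`_i`_j * c * (-1) ^+ (j * k)) (mono K (i + k) (j + l)))) //.
by move=> k l; rewrite mulr0 mul0r kscale0.
Qed.

Lemma smul_kmono (x y : K) a b c d :
  smul (kscale x (mono K a b)) (kscale y (mono K c d)) =
  kscale (x * y * (-1) ^+ (b * c)) (mono K (a + c) (b + d)).
Proof.
set N := (a + b + c + d).+1.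
have ha : (a < N)%N by rewrite /N; lia.
have hb : (b < N)%N by rewrite /N; lia.
have hc : (c < N)%N by rewrite /N; lia.
have hd : (d < N)%N by rewrite /N; lia.
rewrite (smul_box (bounded_kmono _ ha hb) (bounded_kmono _ hc hd)).
rewrite (sum_ord_only ha) => [|i /negbTE ne]; last first.
  by apply: big1 => j _; apply: big1 => k _; apply: big1 => l _;
    rewrite coef_kmono ne !mul0r kscale0.
rewrite (sum_ord_only hb) => [|j /negbTE ne]; last first.
  by apply: big1 => k _; apply: big1 => l _; rewrite coef_kmono ne andbF !mul0r kscale0.
rewrite (sum_ord_only hc) => [|k /negbTE ne]; last first.
  by apply: big1 => l _; rewrite [X in _ * X * _]coef_kmono ne mulr0 mul0r kscale0.
rewrite (sum_ord_only hd) => [|l /negbTE ne]; last first.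
  by rewrite [X in _ * X * _]coef_kmono ne andbF mulr0 mul0r kscale0.
by rewrite /= !coef_kmono !eqxx.
Qed.

Lemma kmono_exp (x : K) a b n :
  (kscale x (mono K a b)) ^+ n = kscale (x ^+ n) (mono K (a * n) (b * n)).
Proof.
elim: n => [|n IH]; first by rewrite !expr0 !muln0 mono00 kscale1.
by rewrite exprS IH kscaleMM monoM -exprS !mulnS.
Qed.

Lemma linf_u (a : K) : linf a 0 = kscale a (mono K 1 0).
Proof. by rewrite /linf kscale0 addr0 /mono expr0 mul1r expr1. Qed.

Lemma linf_v (c : K) : linf 0 c = kscale c (mono K 0 1).
Proof. by rewrite /linf kscale0 add0r /mono expr0 mulr1 expr1. Qed.

Lemma spow_u (a : K) n : spow (linf a 0) n = kscale (a ^+ n) (mono K n 0).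
Proof.
elim: n => [|n IH]; first by rewrite expr0 mono00 kscale1.
by rewrite /spow iterS -/(spow _ n) IH linf_u smul_kmono mul0n expr0 mulr1 -exprS.
Qed.

Lemma spow_v (c : K) n : spow (linf 0 c) n = kscale (c ^+ n) (mono K 0 n).
Proof.
elim: n => [|n IH]; first by rewrite expr0 mono00 kscale1.
by rewrite /spow iterS -/(spow _ n) IH linf_v smul_kmono mul1n expr0 mulr1 -exprS.
Qed.

(* Diagonal matrices rescale u^a v^b; antidiagonal ones also swap u and v,
   which in the skew ring costs the sign (-1)^(ab) of reordering v^a u^b. *)
Lemma coef_sact_diag (x y : K) (p : bp) a b :
  (sact (mx2 x 0 0 y) p)`_a`_b = p`_a`_b * (x ^+ a * y ^+ b).
Proof.
rewrite /sact; have [-> -> -> ->] := mx2E x 0 0 y.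
under eq_bigr => i _ do under eq_bigr => j _ do
  rewrite spow_u spow_v smul_kmono kscaleA mul0n expr0 mulr1 addn0 add0n.
exact: (coef_reweight p (fun i j => x ^+ i * y ^+ j)).
Qed.

Lemma coef_sact_anti (x y : K) (p : bp) a b :
  (sact (mx2 0 x y 0) p)`_a`_b = p`_b`_a * (y ^+ b * x ^+ a * (-1) ^+ (b * a)).
Proof.
rewrite /sact; have [-> -> -> ->] := mx2E 0 x y 0.
under eq_bigr => i _ do under eq_bigr => j _ do
  rewrite spow_v spow_u smul_kmono kscaleA addn0 add0n.
exact: (coef_reweight_swap p (fun i j => y ^+ i * x ^+ j * (-1) ^+ (i * j))).
Qed.

Lemma coef_cact_diag (x y : K) (p : bp) a b :
  (cact (mx2 x 0 0 y) p)`_a`_b = p`_a`_b * (x ^+ a * y ^+ b).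
Proof.
rewrite /cact; have [-> -> -> ->] := mx2E x 0 0 y.
under eq_bigr => i _ do under eq_bigr => j _ do
  rewrite linf_u linf_v !kmono_exp kscaleMM monoM kscaleA !mul1n !mul0n addn0 add0n.
exact: (coef_reweight p (fun i j => x ^+ i * y ^+ j)).
Qed.

Lemma coef_cact_anti (x y : K) (p : bp) a b :
  (cact (mx2 0 x y 0) p)`_a`_b = p`_b`_a * (y ^+ b * x ^+ a).
Proof.
rewrite /cact; have [-> -> -> ->] := mx2E 0 x y 0.
under eq_bigr => i _ do under eq_bigr => j _ do
  rewrite linf_u linf_v !kmono_exp kscaleMM monoM kscaleA !mul1n !mul0n addn0 add0n.
exact: (coef_reweight_swap p (fun i j => y ^+ i * x ^+ j)).
Qed.

End Coefficients.

Section Substitution.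
Variable K : fieldType.
Local Notation bp := (bpoly K).
Local Notation const := ((@polyC {poly K}) \o (@polyC K)).

(* Horner evaluation needs the evaluation points to commute with the
   coefficients, which is automatic in the commutative ring k[u,v]. *)
Lemma const_comm (b : bp) : commr_rmorph const b.
Proof. by move=> x; rewrite /GRing.comm mulrC. Qed.

Lemma eval_v_comm (b a : bp) : commr_rmorph (horner_morph (const_comm b)) a.
Proof. by move=> x; rewrite /GRing.comm mulrC. Qed.

(* [subst2 a b q] = q(a, b): the commutative substitution u := a, v := b,
   a ring endomorphism of k[u,v]. *)
Definition subst2 (a b : bp) : {rmorphism bp -> bp} := horner_morph (eval_v_comm b a).

Lemma subst2_expand N (a b q : bp) : bounded N q ->
  subst2 a b q = \sum_(i < N) \sum_(j < N) kscale q`_i`_j (a ^+ i * b ^+ j).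
Proof.
case=> h1 h2; rewrite /subst2 /= (horner_morph_wide _ h1); apply: eq_bigr => i _.
transitivity (\sum_(j < N) const q`_i`_j * b ^+ j * a ^+ i).
  by rewrite -mulr_suml; congr (_ * _); exact: horner_morph_wide.
by apply: eq_bigr => j _; rewrite /kscale /=; ring.
Qed.

Lemma subst2_kscale a b (c : K) x : subst2 a b (kscale c x) = kscale c (subst2 a b x).
Proof.
rewrite /kscale rmorphM /subst2 /= horner_morphC.
by congr (_ * _); exact: horner_morphC.
Qed.

Lemma subst2_u a b : subst2 a b (var_u K) = a.
Proof. exact: horner_morphX. Qed.

Lemma subst2_v a b : subst2 a b (var_v K) = b.
Proof. by rewrite /subst2 /= /var_v horner_morphC; exact: horner_morphX. Qed.

Lemma subst2_linf a b (c d : K) : subst2 a b (linf c d) = kscale c a + kscale d b.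
Proof. by rewrite /linf rmorphD !subst2_kscale subst2_u subst2_v. Qed.

Lemma subst2_comp a b c d q :
  subst2 a b (subst2 c d q) = subst2 (subst2 a b c) (subst2 a b d) q.
Proof.
have [N [hN _ _]] := bounded_exists q 0 0.
rewrite !(subst2_expand _ _ hN) rmorph_sum; apply: eq_bigr => i _.
rewrite rmorph_sum; apply: eq_bigr => j _.
by rewrite subst2_kscale rmorphM !rmorphXn.
Qed.

Lemma subst2_id q : subst2 (var_u K) (var_v K) q = q.
Proof.
have [N [hN _ _]] := bounded_exists q 0 0.
rewrite (subst2_expand _ _ hN) {2}(box_expand hN).
apply: eq_bigr => i _; apply: eq_bigr => j _.
by rewrite /var_u /var_v /mono -rmorphXn mulrC.
Qed.

Lemma cact_subst2 M q :
  cact M q = subst2 (linf (M 0 0) (M 1 0)) (linf (M 0 1) (M 1 1)) q.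
Proof.
have [N [hN _ _]] := bounded_exists q 0 0.
rewrite (subst2_expand _ _ hN) /cact.
rewrite (@sum_coefs_widen _ _ N q (fun i j c => kscale c (linf (M 0 0) (M 1 0) ^+ i *
   linf (M 0 1) (M 1 1) ^+ j))) //.
by move=> i j; rewrite kscale0.
Qed.

End Substitution.

Section Twist.
Variable K : fieldType.
Local Notation bp := (bpoly K).

Definition sg i : K := (-1) ^+ 'C(i, 2).

Lemma sgK i : sg i * sg i = 1.
Proof. by rewrite -expr2 sqrr_sign. Qed.

Lemma bin2D i k : 'C(i + k, 2) = ('C(i, 2) + 'C(k, 2) + i * k)%N.
Proof.
elim: k => [|k IH]; first by rewrite addn0 (bin_small (ltn0Sn 1)) muln0 !addn0.
by rewrite addnS !binS !bin1 IH; lia.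
Qed.

Lemma sgD i k : sg (i + k) = sg i * sg k * (-1) ^+ (i * k).
Proof. by rewrite /sg bin2D !exprD. Qed.

(* On monomials u^i v^j with i + j even, the sign (-1)^(jk) of the skew
   product is absorbed by the cocycle sg. *)
Lemma sg_twist i j k : ~~ odd (i + j) -> sg (i + k) * (-1) ^+ (j * k) = sg i * sg k.
Proof.
move=> ev; have eji : (-1) ^+ (j * k) = (-1) ^+ (i * k) :> K.
  by rewrite -signr_odd oddM; move: ev; rewrite oddD negb_add => /eqP <-;
     rewrite -oddM signr_odd.
by rewrite sgD eji -mulrA -expr2 sqrr_sign mulr1.
Qed.

Definition phi (p : bp) : bp := \poly_(i < size p) (sg i *: p`_i).

Lemma coef_phi p i j : (phi p)`_i`_j = sg i * p`_i`_j.
Proof.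
rewrite /phi coef_poly; case: ltnP => h; first by rewrite coefZ.
by rewrite coef0 (nth_default 0 h) coef0 mulr0.
Qed.

Lemma phiK p : phi (phi p) = p.
Proof. by apply/polyP => i; apply/polyP => j; rewrite !coef_phi mulrA sgK mul1r. Qed.

Lemma phiD p q : phi (p + q) = phi p + phi q.
Proof. by apply/polyP => i; apply/polyP => j; rewrite !(coef_phi, coefD) mulrDr. Qed.

Lemma phi1 : phi 1 = 1.
Proof.
apply/polyP => i; apply/polyP => j; rewrite coef_phi coef1.
by case: eqP => [->|]; rewrite ?coef1 ?coef0 ?mulr0 // /sg bin_small // expr0 mul1r.
Qed.

Lemma phi_kscale c p : phi (kscale c p) = kscale c (phi p).
Proof. by apply/polyP => i; apply/polyP => j; rewrite !(coef_phi, coef_kscale); ring. Qed.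

Lemma phi_sum (I : finType) (F : I -> bp) : phi (\sum_i F i) = \sum_i phi (F i).
Proof.
apply: (big_morph _ phiD).
by apply/polyP => i; apply/polyP => j; rewrite !(coef_phi, coef0) mulr0.
Qed.

Lemma phi_kmono c a b : phi (kscale c (mono K a b)) = kscale (sg a * c) (mono K a b).
Proof.
apply/polyP => i; apply/polyP => j; rewrite coef_phi !coef_kmono.
by case: ifP => [/andP[/eqP -> _]|]; rewrite ?mulr0.
Qed.

Definition even_support (p : bp) := forall i j, p`_i`_j != 0 -> ~~ odd (i + j).

Lemma bounded_phi N p : bounded N p -> bounded N (phi p).
Proof.
move=> hp; apply: boundedP => i j; rewrite coef_phi mulf_eq0 negb_or => /andP[_].
by apply: contraR; rewrite negb_and -!leqNgt => /(bounded_coef hp) ->.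
Qed.

Lemma phi_smul p q : even_support p -> phi (smul p q) = phi p * phi q.
Proof.
move=> ep.
have [N1 [h1 _ _]] := bounded_exists p 0 0; have [N2 [h2 _ _]] := bounded_exists q 0 0.
have hp : bounded (N1 + N2) p by apply: bounded_le h1; lia.
have hq : bounded (N1 + N2) q by apply: bounded_le h2; lia.
rewrite (smul_box hp hq) (box_expand (bounded_phi hp)) (box_expand (bounded_phi hq)).
rewrite phi_sum mulr_suml; apply: eq_bigr => i _.
rewrite phi_sum mulr_suml; apply: eq_bigr => j _.
rewrite mulr_sumr phi_sum; apply: eq_bigr => k _.
rewrite mulr_sumr phi_sum; apply: eq_bigr => l _.
rewrite phi_kmono kscaleMM monoM !coef_phi; congr kscale.
have [->|/ep ev] := eqVneq p`_i`_j 0; first by rewrite !(mulr0, mul0r).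
transitivity (sg (i + k) * (-1) ^+ (j * k) * (p`_i`_j * q`_k`_l)); first ring.
by rewrite sg_twist //; ring.
Qed.

End Twist.

Section ChangeOfVariables.
Variable K : fieldType.
Hypothesis two_neq0 : (2 : K) != 0.
Local Notation bp := (bpoly K).

(* psi : u |-> u + v, v |-> u - v; since psi (psi q) = q(2u, 2v), psi is an
   automorphism of k[u,v], with inverse q |-> psi (q(u/2, v/2)). *)
Definition psi : bp -> bp := subst2 (linf 1 1) (linf 1 (-1)).
Definition halve : bp -> bp := subst2 (kscale 2^-1 (var_u K)) (kscale 2^-1 (var_v K)).

Lemma psi_psi q : psi (psi q) = subst2 (kscale 2 (var_u K)) (kscale 2 (var_v K)) q.
Proof.
rewrite /psi subst2_comp !subst2_linf; apply: (congr2 (fun a b => subst2 a b q));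
  by rewrite /linf /kscale !polyCN !polyC1 !polyC_natr; ring.
Qed.

Lemma psi_psi_halve q : psi (psi (halve q)) = q.
Proof.
by rewrite psi_psi /halve subst2_comp !subst2_kscale !subst2_u !subst2_v !kscaleA
  mulVf // !kscale1 subst2_id.
Qed.

Lemma halve_psi_psi q : halve (psi (psi q)) = q.
Proof.
by rewrite psi_psi /halve subst2_comp !subst2_kscale !subst2_u !subst2_v !kscaleA
  mulfV // !kscale1 subst2_id.
Qed.

Lemma psi_inj : injective psi.
Proof. by move=> x y e; rewrite -(halve_psi_psi x) -(halve_psi_psi y) e. Qed.

Lemma cact_psi (z : K) r : cact (mx2 z 0 0 (- z)) (psi r) = psi (cact (mx2 0 z z 0) r).
Proof.
rewrite !cact_subst2 /psi.
have [-> -> -> ->] := mx2E z 0 0 (- z); have [-> -> -> ->] := mx2E 0 z z 0.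
rewrite !subst2_comp !subst2_linf; apply: (congr2 (fun a b => subst2 a b r));
  by rewrite /linf /kscale !polyCN !polyC1 !polyC0; ring.
Qed.

End ChangeOfVariables.

Section DiagonalInvariants.
Variable K : fieldType.
Local Notation bp := (bpoly K).

Lemma in_gen_mem (gs : seq 'M[K]_2) g : g \in gs -> in_gen gs g.
Proof. by move=> hg; move: (in_genM (in_gen1 gs) hg); rewrite mul1mx. Qed.

(* The group generated by a diagonal matrix consists of its powers, so
   invariance under it reduces to invariance under the generator. *)
Lemma in_gen_diag (x y : K) M : in_gen [:: mx2 x 0 0 y] M ->
  exists s, M = mx2 (x ^+ s) 0 0 (y ^+ s).
Proof.
elim=> [|{}M g _ [s ->]]; first by exists 0%N; rewrite !expr0 mx2_1.
rewrite mem_seq1 => /eqP ->; rewrite mx2_mul.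
by exists s.+1; rewrite !exprSr; congr mx2; ring.
Qed.

Lemma comm_invariant_diag (x y : K) q :
  comm_invariant [:: mx2 x 0 0 y] q <-> cact (mx2 x 0 0 y) q = q.
Proof.
split=> [h | h M /in_gen_diag [s ->]].
  by apply/h/in_gen_mem; rewrite mem_seq1.
apply/polyP => a; apply/polyP => b; rewrite coef_cact_diag.
have := congr1 (fun q : bp => q`_a`_b) h; rewrite /= coef_cact_diag => e.
have [-> |nz] := eqVneq q`_a`_b 0; first by rewrite mul0r.
have e1 : x ^+ a * y ^+ b = 1 by apply: (mulfI nz); rewrite mulr1.
have -> : (x ^+ s) ^+ a * (y ^+ s) ^+ b = (x ^+ a * y ^+ b) ^+ s.
  by rewrite exprMn -!exprM (mulnC s a) (mulnC s b).
by rewrite e1 expr1n mulr1.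
Qed.

Lemma cact_swap_fixed (z : K) r :
  cact (mx2 0 z z 0) r = r <-> forall a b, r`_a`_b = z ^+ (a + b) * r`_b`_a.
Proof.
split=> [h a b | h].
  rewrite -[LHS](congr1 (fun q : bp => q`_a`_b) h) coef_cact_anti.
  by rewrite exprD mulrC (mulrC (z ^+ b)).
apply/polyP => a; apply/polyP => b.
by rewrite coef_cact_anti (h a b) exprD mulrC (mulrC (z ^+ b)).
Qed.

End DiagonalInvariants.

Section Main.
Variable K : fieldType.
Local Notation bp := (bpoly K).
Hypothesis two_neq0 : (2 : K) != 0.
Variable k : nat.
Hypothesis k_odd : odd k.
Variables w w' : K.
Hypothesis w_prim : (2 * 2 * k)%N.-primitive_root w.
Hypothesis w'_prim : (4 * k)%N.-primitive_root w'.

Lemma w_half : w ^+ (2 * k) = -1.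
Proof. by apply: prim_root_half; rewrite (_ : (2 * k * 2 = 2 * 2 * k)%N) //; lia. Qed.

Lemma w'_half : w' ^+ (2 * k) = -1.
Proof. by apply: prim_root_half; rewrite (_ : (2 * k * 2 = 4 * k)%N) //; lia. Qed.

Lemma sg_mul2k m : sg K (2 * k * m) = (-1) ^+ m.
Proof.
elim: m => [|m IH]; first by rewrite muln0 /sg bin_small // expr0.
rewrite mulnS sgD IH -(signr_odd K (2 * k * (2 * k * m))) !oddM /= expr0 mulr1 exprS.
rewrite (_ : (2 * k = k + k)%N); last by lia.
by rewrite sgD sgK mul1r -(signr_odd K (k * k)) oddM k_odd expr1 mulrC.
Qed.

Lemma sg_swap a b m : (a + b = 2 * k * m)%N ->
  (-1) ^+ m = sg K a * (-1) ^+ (a * b) * sg K b.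
Proof. by move=> e; rewrite -(sg_mul2k m) -e sgD; ring. Qed.

Definition skew_cond (p : bp) := forall a b,
  p`_a`_b = (-1) ^+ (a * b) * p`_b`_a /\ (p`_a`_b != 0 -> (2 * k %| a + b)%N).

(* Coefficient description of invariance under u |-> w' v, v |-> w' u. *)
Definition swap_cond (r : bp) := forall a b, r`_a`_b = w' ^+ (a + b) * r`_b`_a.

Lemma skew_cond0 p a b : skew_cond p -> ~~ (2 * k %| a + b)%N -> p`_a`_b = 0.
Proof. by move=> h nd; apply/eqP; apply: contraNT nd => /(proj2 (h a b)). Qed.

Lemma skew_cond_even p : skew_cond p -> even_support p.
Proof. by move=> h a b /(proj2 (h a b)) /dvdnP[m ->]; rewrite !oddM /= andbF. Qed.

Lemma swap_cond_dvd r a b : swap_cond r -> r`_a`_b != 0 -> (2 * k %| a + b)%N.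
Proof.
move=> h ne.
have e : r`_a`_b = w' ^+ ((a + b) * 2) * r`_a`_b.
  by rewrite {1}h h addnC mulrA -exprD addnn -mul2n mulnC.
have : w' ^+ ((a + b) * 2) == 1 by apply/eqP/(mulIf ne); rewrite mul1r -e.
rewrite -(prim_order_dvd w'_prim) (_ : (4 * k = 2 * k * 2)%N); last by lia.
by rewrite dvdn_pmul2r.
Qed.

Lemma skew_cond_twist p : skew_cond p -> swap_cond (phi p).
Proof.
move=> h a b; rewrite !coef_phi (proj1 (h a b)).
have [->|ne] := eqVneq p`_b`_a 0; first by rewrite !mulr0.
have /dvdnP[m hm] := proj2 (h b a) ne.
have hab : (a + b = 2 * k * m)%N by lia.
rewrite hab (exprM w') w'_half (sg_swap hab).
transitivity (sg K a * (-1) ^+ (a * b) * (sg K b * sg K b) * p`_b`_a); last by ring.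
by rewrite sgK mulr1 mulrA.
Qed.

Lemma swap_cond_twist r : swap_cond r -> skew_cond (phi r).
Proof.
move=> h a b; rewrite !coef_phi; split; last first.
  by rewrite mulf_eq0 negb_or => /andP[_]; apply: swap_cond_dvd.
have [e|ne] := eqVneq r`_b`_a 0; first by rewrite (h a b) e !mulr0.
have /dvdnP[m hm] := swap_cond_dvd h ne.
have hab : (a + b = 2 * k * m)%N by lia.
rewrite (h a b) hab (exprM w') w'_half (sg_swap hab).
transitivity (sg K a * sg K a * (-1) ^+ (a * b) * (sg K b * r`_b`_a)); first by ring.
by rewrite sgK mul1r.
Qed.

(* G_{2,k} consists of the matrices mu I and mu [[0,1],[1,0]], mu^(2k) = 1:
   its generators are -I and w^2 [[0,1],[1,0]]. *)
Lemma G2k_elements M : in_gen (G_nk 2 k w) M ->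
  exists2 mu, mu ^+ (2 * k) = 1 & M = mx2 mu 0 0 mu \/ M = mx2 0 mu mu 0.
Proof.
have sign2k : (-1) ^+ (2 * k) = 1 :> K by rewrite -signr_odd oddM.
have w2_2k : (w ^+ 2) ^+ (2 * k) = 1.
  by rewrite -exprM (_ : (2 * (2 * k) = 2 * 2 * k)%N) ?prim_expr_order //; lia.
elim=> [|{}M g _ [mu hmu hM]]; first by exists 1; [rewrite expr1n | left; rewrite mx2_1].
rewrite !inE w_half invrN1 => /orP[] /eqP ->; case: hM => ->; rewrite mx2_mul.
- by exists (- mu); [rewrite exprNn sign2k hmu mulr1 | left; congr mx2; ring].
- by exists (- mu); [rewrite exprNn sign2k hmu mulr1 | right; congr mx2; ring].
- by exists (mu * w ^+ 2); [rewrite exprMn hmu w2_2k mulr1 | right; congr mx2; ring].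
- by exists (mu * w ^+ 2); [rewrite exprMn hmu w2_2k mulr1 | left; congr mx2; ring].
Qed.

Lemma skew_cond_invariant p : skew_cond p -> skew_invariant (G_nk 2 k w) p.
Proof.
move=> h M /G2k_elements [mu hmu [->|->]]; apply/polyP => a; apply/polyP => b.
  rewrite coef_sact_diag; have [/dvdnP[m hm]|nd] := boolP (2 * k %| a + b)%N.
    by rewrite -exprD hm (mulnC m) exprM hmu expr1n mulr1.
  by rewrite (skew_cond0 h nd) mul0r.
rewrite coef_sact_anti; have [/dvdnP[m hm]|nd] := boolP (2 * k %| a + b)%N.
  rewrite (proj1 (h a b)) -exprD addnC hm (mulnC m) exprM hmu expr1n mulnC; ring.
rewrite (skew_cond0 h nd) (@skew_cond0 _ b a h) ?mul0r //.
by rewrite addnC.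
Qed.

Lemma skew_invariant_coefs p : skew_invariant (G_nk 2 k w) p ->
  (forall a b, p`_a`_b * (-1) ^+ (a + b) = p`_a`_b) /\
  (forall a b, p`_a`_b = p`_b`_a * ((w ^+ 2) ^+ (a + b) * (-1) ^+ (a * b))).
Proof.
move=> h; split=> a b.
  have := h _ (in_gen_mem (mem_head _ _)); rewrite w_half invrN1.
  by move=> /(congr1 (fun q : bp => q`_a`_b)); rewrite coef_sact_diag exprD.
have /h : in_gen (G_nk 2 k w) (mx2 0 (w ^+ 2) (w ^+ 2) 0).
  by apply: in_gen_mem; rewrite !inE eqxx orbT.
move=> /(congr1 (fun q : bp => q`_a`_b)); rewrite coef_sact_anti => <-.
by rewrite exprD mulnC; ring.
Qed.

(* From these relations, a nonzero coefficient forces 2k | a + b: parity from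
   -I, and k | a + b from applying the swap twice; k odd makes these coprime. *)
Lemma skew_invariant_support p a b : skew_invariant (G_nk 2 k w) p ->
  p`_a`_b != 0 -> (2 * k %| a + b)%N.
Proof.
move=> /skew_invariant_coefs [c1 c2] ne.
have ev : ~~ odd (a + b).
  apply: contraNN (neg1_neq1 two_neq0) => od; apply/eqP/(mulfI ne).
  by rewrite mulr1 -[RHS](c1 a b) -(signr_odd K (a + b)) od expr1.
have kd : (k %| a + b)%N.
  have e : p`_a`_b = p`_a`_b * (w ^+ 2) ^+ ((a + b) * 2).
    rewrite {1}c2 c2 (addnC b a) (mulnC b a) [in RHS]exprM.
    transitivity (p`_a`_b * (w ^+ 2) ^+ (a + b) ^+ 2 * ((-1) ^+ (a * b) * (-1) ^+ (a * b))).
      ring.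
    by rewrite -expr2 sqrr_sign mulr1.
  have : (w ^+ 2) ^+ ((a + b) * 2) == 1 by apply/eqP/(mulfI ne); rewrite mulr1 -e.
  rewrite -exprM -(prim_order_dvd w_prim) (_ : (2 * 2 * k = k * 4)%N); last by lia.
  by rewrite (_ : (2 * ((a + b) * 2) = (a + b) * 4)%N) ?dvdn_pmul2r //; lia.
by rewrite Gauss_dvd ?coprime2n // dvdn2 ev.
Qed.

Lemma skew_invariant_cond p : skew_invariant (G_nk 2 k w) p -> skew_cond p.
Proof.
move=> h a b; split; last exact: skew_invariant_support.
have [/dvdnP[m hm]|nd] := boolP (2 * k %| a + b)%N.
  have w2 : (w ^+ 2) ^+ (a + b) = 1.
    rewrite hm -exprM.
    have -> : (2 * (m * (2 * k)) = 2 * 2 * k * m)%N by lia.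
    by rewrite exprM (prim_expr_order w_prim) expr1n.
  by rewrite (proj2 (skew_invariant_coefs h)) w2 mul1r mulrC.
have off_support a' b' : ~~ (2 * k %| a' + b')%N -> p`_a'`_b' = 0.
  by move=> nd'; apply/eqP; apply: contraNT nd' => /(skew_invariant_support h).
by rewrite !off_support ?mulr0 // addnC.
Qed.

(* On the commutative side: the generator diag(w', w'^(2k+1)) = diag(w', -w')
   is conjugate under psi to the swap u |-> w' v, v |-> w' u. *)
Lemma psi_cyc_invariant r :
  comm_invariant (cyc_gen (4 * k) (2 * k + 1) w') (psi r) <-> swap_cond r.
Proof.
rewrite /cyc_gen exprD w'_half expr1 mulN1r comm_invariant_diag cact_psi.
by split=> [/(psi_inj two_neq0) /cact_swap_fixed // | /cact_swap_fixed ->].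
Qed.

Lemma skew_comm_iso : alg_iso_skew_comm (skew_invariant (G_nk 2 k w))
    (comm_invariant (cyc_gen (4 * k) (2 * k + 1) w')).
Proof.
exists (fun p => psi (phi p)); split.
- by move=> p /skew_invariant_cond /skew_cond_twist /psi_cyc_invariant.
- move=> q hq; set r := psi (halve q).
  have qr : psi r = q by exact: (psi_psi_halve two_neq0).
  have /psi_cyc_invariant hr : comm_invariant (cyc_gen (4 * k) (2 * k + 1) w') (psi r).
    by rewrite qr.
  by exists (phi r); [exact/skew_cond_invariant/swap_cond_twist | rewrite phiK].
- by move=> p q _ _ /(psi_inj two_neq0) e; rewrite -(phiK p) e phiK.
- by rewrite phi1 /psi rmorph1.
- move=> p q c /skew_invariant_cond hp _; rewrite /psi.
  rewrite phiD rmorphD phi_smul ?rmorphM ?phi_kscale ?subst2_kscale //.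
  exact: skew_cond_even.
Qed.

End Main.

Theorem mainTheorem16 (K : closedFieldType) (Hchar : [pchar K] =i pred0)
    (k : nat) (Hk : odd k) (w w' : K)
    (Hw : (2 * 2 * k)%N.-primitive_root w)
    (Hw' : (4 * k)%N.-primitive_root w') :
  alg_iso_skew_comm
    (skew_invariant (G_nk 2 k w))
    (comm_invariant (cyc_gen (4 * k) (2 * k + 1) w')).
Proof.
apply: (skew_comm_iso _ Hk Hw Hw').
by rewrite ((pcharf0P K).1 Hchar 2).
Qed.
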